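(* Let $\mathcal{A}=\{e_1,\dots,e_d\}$ be the standard basis of $\mathbb{R}^d$, $\pi_{\mathrm{off}}\in\Delta(\mathcal{A})$, $\mathcal{A}_l\subseteq\mathcal{A}$ nonempty with $\pi_{\mathrm{off}}(a)>0$ for all $a\in\mathcal{A}_l$, and $\alpha\in[0,1)$. Let $0<\pi_{(1)}<\pi_{(2)}<\dots<\pi_{(r)}\le1$ be the distinct values of $\pi_{\mathrm{off}}(a)$, $a\in\mathcal{A}_l$, the value $\pi_{(i)}$ being taken $m_i$ times. Define $\beta_1=1$, $\beta_i=\big(1+\sum_{j=1}^{i-1}m_j(\pi_{(i)}-\pi_{(j)})\big)^{-1}$ for $1<i\le r$, and $\beta_{r+1}=0$. Then there is $i\in[r]$ with $\beta_{i+1}\le\alpha<\beta_i$, and for this $i$, with $\pi^*\in\arg\max_{\pi\in\Delta(\mathcal{A}_l)}\log\det\big(V_{(1-\alpha)\pi+\alpha\pi_{\mathrm{off}}}\big)$ and $\tilde\pi^\star=(1-\alpha)\pi^*+\alpha\pi_{\mathrm{off}}$, $$g_{\mathcal{A}_l}(\tilde\pi^\star)=\frac{\sum_{j=1}^im_j}{\alpha\sum_{j=1}^im_j\pi_{(j)}+1-\alpha}.$$ Further, the support of $\pi^*$ is $S_i=\{a\in\mathcal{A}_l:\pi_{\mathrm{off}}(a)\le\pi_{(i)}\}$ and for $a\in S_i$, $$\pi^*(a)=\frac1{|S_i|}+\frac{\alpha}{1-\alpha}\Big[\frac{\pi_{\mathrm{off}}(S_i)}{|S_i|}-\pi_{\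mathrm{off}}(a)\Big].$$
   Context: $\Delta(\mathcal{B})$ is the probability simplex over $\mathcal{B}$; $V_\pi=\sum_a\pi(a)aa^\top$; $g_{\mathcal{B}}(\pi)=\max_{a\in\mathcal{B}}a^\top V_\pi^{-1}a$; $\pi_{\mathrm{off}}(S)=\sum_{a\in S}\pi_{\mathrm{off}}(a)$. *)

From HB Require Import structures.
From mathcomp Require Import all_boot all_order all_algebra.
From mathcomp Require Import all_classical all_reals all_analysis.
Set Implicit Arguments. Unset Strict Implicit. Unset Printing Implicit Defensive.
Import Order.TTheory GRing.Theory Num.Theory.
Local Open Scope ring_scope.

Section Defs.
Variable R : realType.
Variable d : nat.

Definition stdb (a : 'I_d) : 'cV[R]_d := delta_mx a 0.

(* pi is a probability distribution over the standard basis supported on B,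
   i.e. pi \in Delta(B) (pi is indexed by the basis index a : 'I_d) *)
Definition inSimplex (B : {set 'I_d}) (pi : 'I_d -> R) : Prop :=
  [/\ forall a, 0 <= pi a, forall a, a \notin B -> pi a = 0
    & \sum_(a < d) pi a = 1].

Definition Vmat (pi : 'I_d -> R) : 'M[R]_d :=
  \sum_(a < d) pi a *: (stdb a *m (stdb a)^T).

(* V_pi as an operator on span(B), written in the orthonormal basis
   (e_b)_{b in B} of span(B):  entries e_b^T V_pi e_b' *)
Definition Vres (B : {set 'I_d}) (pi : 'I_d -> R) : 'M[R]_#|B| :=
  \matrix_(i, j) ((stdb (enum_val i))^T *m Vmat pi *m stdb (enum_val j)) 0 0.

Definition logdet n (M : 'M[R]_n) : \bar R :=
  if 0 < \det M then (ln (\det M))%:E else -oo%E.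

(* g_B(pi) = max_{a in B} a^T V_pi^{-1} a, with V_pi taken on span(B)
   (for a = e_{enum_val i}, its coordinate vector in that basis is delta i) *)
Definition gB (B : {set 'I_d}) (pi : 'I_d -> R) : R :=
  \big[Num.max/0]_(i < #|B|)
     ((delta_mx i 0 : 'cV[R]_#|B|)^T *m invmx (Vres B pi) *m (delta_mx i 0 : 'cV[R]_#|B|)) 0 0.

Definition mix (alpha : R) (poff pi : 'I_d -> R) : 'I_d -> R :=
  fun a => (1 - alpha) * pi a + alpha * poff a.

Definition is_argmax_logdet (B : {set 'I_d}) (alpha : R) (poff pi : 'I_d -> R)
  : Prop :=
  inSimplex B pi /\
  forall pi', inSimplex B pi' ->
    (logdet (Vres B (mix alpha poff pi')) <= logdet (Vres B (mix alpha poff pi)))%E.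

(* the distinct values pi_(1) < ... < pi_(r) of poff on B, 0-indexed *)
Definition dvals (B : {set 'I_d}) (poff : 'I_d -> R) : seq R :=
  sort <=%R (undup [seq poff a | a <- enum B]).

Definition rnum (B : {set 'I_d}) (poff : 'I_d -> R) : nat := size (dvals B poff).

(* pi_(j+1) in the paper's 1-indexed notation *)
Definition piv (B : {set 'I_d}) (poff : 'I_d -> R) (j : nat) : R :=
  nth 0 (dvals B poff) j.

Definition mult (B : {set 'I_d}) (poff : 'I_d -> R) (j : nat) : nat :=
  #|[set a in B | poff a == piv B poff j]|.

(* beta_(i+1) (0-indexed): beta i = (1 + sum_{j<i} m_j (pi_i - pi_j))^-1 for
   i < r (which gives 1 for i = 0), and beta r = 0 *)
Definition beta (B : {set 'I_d}) (poff : 'I_d -> R) (i : nat) : R :=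
  if (i < rnum B poff)%N then
    (1 + \sum_(j < i) (mult B poff j)%:R * (piv B poff i - piv B poff j))^-1
  else 0.

Definition Sset (B : {set 'I_d}) (poff : 'I_d -> R) (i : nat) : {set 'I_d} :=
  [set a in B | poff a <= piv B poff i].

End Defs.

(* Every action is a standard basis vector, so [V_pi] is diagonal: [log det]
   becomes the separable concave function [\sum_(a in Al) ln (mix pi a)] and
   [g] is the largest of the reciprocals [1 / mix pi a].  Its maximiser over the
   simplex is given by water filling: the mixture is raised to a common level
   [c] on the actions whose offline mass [alpha * poff a] lies below [c] and is
   left at [alpha * poff a] elsewhere.  The bracket
   [beta_(i+1) <= alpha < beta_i] says exactly that the filled actions are
   [S_i], which determines [c = (1 - alpha + alpha * poff(S_i)) / |S_i|], hence
   [g = 1 / c] and the formula for [pi*].  Uniqueness of the maximiser comes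
   from [ln x <= x - 1], with equality only at [x = 1]. *)

From Pilot Require Import Defs.
From HB Require Import structures.
From mathcomp Require Import all_boot all_order all_algebra.
From mathcomp Require Import all_classical all_reals all_analysis.
From mathcomp Require Import ring lra.
Import Order.TTheory GRing.Theory Num.Theory.
Local Open Scope ring_scope.
Set Implicit Arguments. Unset Strict Implicit. Unset Printing Implicit Defensive.

Section Diagonal.
Variables (R : realType) (d : nat).

Lemma Vmat_diag (pi : 'I_d -> R) : Vmat pi = diag_mx (\row_a pi a).
Proof.
rewrite /Vmat diag_mx_sum_delta; apply: eq_bigr => a _.
by rewrite /stdb trmx_delta mul_delta_mx mxE.
Qed.

Lemma Vres_diag (B : {set 'I_d}) (pi : 'I_d -> R) :
  Vres B pi = diag_mx (\row_i pi (enum_val i)).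
Proof.
apply/matrixP => i j; rewrite /Vres mxE Vmat_diag /stdb trmx_delta -rowE -colE.
rewrite !mxE; case: (eqVneq i j) => [->|neq_ij]; first by rewrite !eqxx.
by rewrite (inj_eq enum_val_inj) (negPf neq_ij).
Qed.

Lemma logdet_Vres (B : {set 'I_d}) (pi : 'I_d -> R) :
  logdet (Vres B pi) =
  if 0 < \prod_(a in B) pi a then (ln (\prod_(a in B) pi a))%:E else -oo%E.
Proof.
rewrite /logdet Vres_diag det_diag (big_enum_val (A := mem B)) /=.
by under eq_bigr do rewrite mxE.
Qed.

Lemma gB_diag (B : {set 'I_d}) (pi : 'I_d -> R) :
  (forall a, a \in B -> pi a != 0) ->
  gB B pi = \big[Num.max/0]_(i < #|B|) (pi (enum_val i))^-1.
Proof.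
move=> pi_neq0; rewrite /gB; set D := diag_mx (\row_i (pi (enum_val i))^-1 : 'rV[R]_#|B|).
have VD : Vres B pi *m D = 1%:M.
  rewrite Vres_diag /D mulmx_diag; apply/matrixP => i j; rewrite !mxE.
  case: (eqVneq i j) => [->|neq_ij]; last by rewrite mulr0n.
  by rewrite mulr1n mulfV // pi_neq0 // enum_valP.
have V_unit : Vres B pi \in unitmx by case: (mulmx1_unit VD).
have -> : invmx (Vres B pi) = D by rewrite -[LHS]mulmx1 -VD mulKmx.
apply: eq_bigr => i _.
by rewrite trmx_delta -rowE -colE !mxE eqxx mulr1n.
Qed.

End Diagonal.

Section Logarithm.
Variable R : realType.

Lemma ln_prod (I : finType) (P : pred I) (f : I -> R) :
  (forall i, P i -> 0 < f i) ->
  ln (\prod_(i | P i) f i) = \sum_(i | P i) ln (f i).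
Proof.
move=> f_gt0.
suff [] : 0 < \prod_(i | P i) f i /\ ln (\prod_(i | P i) f i) = \sum_(i | P i) ln (f i)
  by [].
apply: (big_rec2 (fun p s => 0 < p /\ ln p = s)) => [|i p s Pi [p_gt0 <-]].
  by rewrite ln1.
by rewrite mulr_gt0 ?lnM ?posrE ?f_gt0.
Qed.

(* Each term [x - 1 - ln x] is nonnegative and vanishes only at [x = 1]. *)
Lemma eq1_of_sum_ln_ge0 (I : finType) (P : pred I) (x : I -> R) :
  (forall i, P i -> 0 < x i) ->
  0 <= \sum_(i | P i) ln (x i) -> \sum_(i | P i) (x i - 1) <= 0 ->
  forall i, P i -> x i = 1.
Proof.
move=> x_gt0 sum_ln_ge0 sum_le0.
have term_ge0 i : P i -> 0 <= x i - 1 - ln (x i).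
  move=> Pi; have := @le_ln1Dx R (x i - 1); rewrite subrKC subr_ge0.
  by apply; rewrite ltrBrDl subrr x_gt0.
have sum_eq0 : \sum_(i | P i) (x i - 1 - ln (x i)) = 0.
  by apply/eqP; rewrite eq_le sumr_ge0 // andbT sumrB; lra.
move=> i Pi; have /eqP := psumr_eq0P term_ge0 sum_eq0 Pi.
rewrite subr_eq0 eq_sym => /eqP ln_x; apply/eqP; rewrite -ln_eq0 ?x_gt0 //.
apply/negPn/negP => /expR_gt1Dx; rewrite lnK ?posrE ?x_gt0 // ln_x; lra.
Qed.

End Logarithm.

Section OrderedValues.
Variables (R : realType) (d : nat) (B : {set 'I_d}) (poff : 'I_d -> R).

Local Notation r := (rnum B poff).
Local Notation piv := (piv B poff).
Local Notation mult := (mult B poff).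
Local Notation Sset := (Sset B poff).

Lemma ler_piv j k : (j < r)%N -> (k < r)%N -> (piv j <= piv k) = (j <= k)%N.
Proof.
apply: lt_sorted_leq_nth.
by rewrite /dvals sort_lt_sorted undup_uniq.
Qed.

Lemma mem_dvals x : (x \in dvals B poff) = (x \in [seq poff a | a <- enum B]).
Proof. by rewrite /dvals mem_sort mem_undup. Qed.

Lemma piv_preimage k : (k < r)%N -> exists2 a, a \in B & poff a = piv k.
Proof.
move=> k_lt_r; rewrite /Defs.piv; have := mem_nth 0 k_lt_r; rewrite mem_dvals => /mapP[a].
by rewrite mem_enum => aB ->; exists a.
Qed.

Lemma piv_index a : a \in B -> exists2 k, (k < r)%N & poff a = piv k.
Proof.
move=> aB; have poff_a : poff a \in dvals B poff.
  by rewrite mem_dvals; apply/mapP; exists a; rewrite ?mem_enum.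
exists (index (poff a) (dvals B poff)); first by rewrite index_mem.
by rewrite /Defs.piv nth_index.
Qed.

Lemma rnum_gt0 : (0 < #|B|)%N -> (0 < r)%N.
Proof. by case/card_gt0P => a /piv_index[k k_lt_r _]; apply: leq_ltn_trans k_lt_r. Qed.

Lemma card_Sset_gt0 i : (i < r)%N -> (0 < #|Sset i|)%N.
Proof.
move=> i_lt_r; have [a aB poff_a] := piv_preimage i_lt_r.
by apply/card_gt0P; exists a; rewrite inE aB poff_a lexx.
Qed.

Lemma sum_Sset (F : 'I_d -> R) i : (i < r)%N ->
  \sum_(a in Sset i) F a = \sum_(j < i.+1) \sum_(a in B | poff a == piv j) F a.
Proof.
move=> i_lt_r; rewrite (exchange_big_dep (mem B)) /=; last by move=> j a _ /andP[].
rewrite (eq_bigl (fun a => (a \in B) && (poff a <= piv i))); last by move=> a; rewrite inE.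
rewrite big_mkcondr; apply: eq_bigr => a aB; have [k k_lt_r poff_a] := piv_index aB.
rewrite (eq_bigl (fun j : 'I_i.+1 => j == k :> nat)) => [|j].
  by rewrite (big_ord1_eq _ (fun=> F a)) poff_a ler_piv.
have j_lt_r : (j < r)%N := leq_trans (ltn_ord j) i_lt_r.
by rewrite aB poff_a eq_le !ler_piv // -eqn_leq eq_sym.
Qed.

Lemma card_Sset i : (i < r)%N ->
  (#|Sset i|%:R : R) = \sum_(j < i.+1) (mult j)%:R.
Proof.
move=> i_lt_r; rewrite -sumr_const (sum_Sset (fun=> 1)) //.
apply: eq_bigr => j _; rewrite sumr_const /Defs.mult.
by congr (_ *+ _); apply: eq_card => a; rewrite inE.
Qed.

Lemma sum_poff_Sset i : (i < r)%N ->
  \sum_(a in Sset i) poff a = \sum_(j < i.+1) (mult j)%:R * piv j.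
Proof.
move=> i_lt_r; rewrite sum_Sset //; apply: eq_bigr => j _.
rewrite (eq_bigr (fun=> piv j)); last by move=> a /andP[_ /eqP].
rewrite sumr_const /Defs.mult mulr_natl.
by congr (_ *+ _); apply: eq_card => a; rewrite inE.
Qed.

Lemma exists_beta_bracket (alpha : R) :
  (0 < #|B|)%N -> 0 <= alpha -> alpha < 1 ->
  exists i, (i < r)%N /\ beta B poff i.+1 <= alpha < beta B poff i.
Proof.
move=> B_gt0 alpha_ge0 alpha_lt1; have r_gt0 := rnum_gt0 B_gt0.
pose P i := (i < r)%N && (alpha < beta B poff i).
have P0 : exists i, P i by exists 0%N; rewrite /P /beta r_gt0 big_ord0 addr0 invr1.
have P_le_r i : P i -> (i <= r)%N by case/andP => /ltnW.
have [i /andP[i_lt_r alpha_lt] i_max] := ex_maxnP P0 P_le_r.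
exists i; split => //; rewrite alpha_lt andbT.
have [i1_lt_r|r_le_i1] := ltnP i.+1 r; last by rewrite /beta ltnNge r_le_i1.
rewrite leNgt; apply/negP => alpha_lt1'.
by have := i_max i.+1; rewrite /P i1_lt_r alpha_lt1' ltnn => /(_ isT).
Qed.

Lemma sum_gap_Sset i k : (k < r)%N -> (i <= k <= i.+1)%N ->
  \sum_(j < k) (mult j)%:R * (piv k - piv j) =
  piv k * #|Sset i|%:R - \sum_(a in Sset i) poff a.
Proof.
move=> k_lt_r /andP[i_le_k k_le_i1].
have i_lt_r : (i < r)%N := leq_ltn_trans i_le_k k_lt_r.
rewrite card_Sset // sum_poff_Sset // mulr_sumr -sumrB.
case: ltngtP i_le_k => // [i_lt_k _|<- _]; last first.
  by rewrite [in RHS]big_ord_recr /= mulrC subrr addr0; apply: eq_bigr => j _; ring.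
have -> : k = i.+1 by apply/eqP; rewrite eqn_leq k_le_i1.
by apply: eq_bigr => j _; ring.
Qed.

Lemma beta_Sset i k : (k < r)%N -> (i <= k <= i.+1)%N ->
  beta B poff k =
  (1 + (piv k * #|Sset i|%:R - \sum_(a in Sset i) poff a))^-1.
Proof.
by move=> k_lt_r k_near_i; rewrite /beta k_lt_r (sum_gap_Sset k_lt_r k_near_i).
Qed.

Lemma Sset_gap_ge0 i k : (k < r)%N -> (i <= k <= i.+1)%N ->
  0 <= piv k * #|Sset i|%:R - \sum_(a in Sset i) poff a.
Proof.
move=> k_lt_r k_near_i; rewrite -(sum_gap_Sset k_lt_r k_near_i).
apply: sumr_ge0 => j _; rewrite mulr_ge0 // subr_ge0 ler_piv //.
  exact: ltnW.
exact: ltn_trans (ltn_ord j) k_lt_r.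
Qed.

End OrderedValues.

Section Optimality.
Variables (R : realType) (d : nat) (B : {set 'I_d}) (poff : 'I_d -> R) (alpha : R).
Hypotheses (poff_ge0 : forall a, 0 <= poff a) (alpha_ge0 : 0 <= alpha)
  (alpha_lt1 : alpha < 1).

Local Notation mix := (mix alpha poff).

Lemma sum_simplex (pi : 'I_d -> R) : inSimplex B pi -> \sum_(a in B) pi a = 1.
Proof.
by case=> _ pi_out <-; rewrite [RHS](bigID (mem B)) /= [X in _ + X]big1 ?addr0.
Qed.

Lemma mix_ge0 (pi : 'I_d -> R) : inSimplex B pi -> forall a, 0 <= mix pi a.
Proof. by case=> pi_ge0 _ _ a; rewrite /Defs.mix addr_ge0 ?mulr_ge0 // subr_ge0 ltW. Qed.

(* The third hypothesis says that the directional derivative of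
   [\sum_(a in B) ln (mix _ a)] at [pi0] towards any [pi'] is nonpositive. *)
Lemma argmax_logdet_unique (pi0 pi : 'I_d -> R) :
  inSimplex B pi0 -> (forall a, a \in B -> 0 < mix pi0 a) ->
  (forall pi', inSimplex B pi' ->
     \sum_(a in B) (mix pi' a / mix pi0 a - 1) <= 0) ->
  is_argmax_logdet B alpha poff pi -> pi = pi0.
Proof.
move=> pi0_simplex m0_gt0 certificate [pi_simplex pi_max].
have := pi_max _ pi0_simplex; rewrite !logdet_Vres prodr_gt0 //.
case: ifP => [prod_gt0|]; last by rewrite leeNy_eq.
rewrite lee_fin => ln_prod_le.
have m1_gt0 a : a \in B -> 0 < mix pi a.
  move=> aB; rewrite lt_neqAle mix_ge0 // andbT; apply/negP => /eqP m1_eq0.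
  by move: prod_gt0; rewrite (bigD1 a) //= -m1_eq0 mul0r ltxx.
have ratio_eq1 : forall a, a \in B -> mix pi a / mix pi0 a = 1.
  apply: eq1_of_sum_ln_ge0 => [a aB||]; first by rewrite divr_gt0 ?m1_gt0 ?m0_gt0.
    rewrite (eq_bigr (fun a => ln (mix pi a) - ln (mix pi0 a))) => [|a aB].
      by rewrite sumrB -!ln_prod // subr_ge0.
    by rewrite ln_div // posrE ?m1_gt0 ?m0_gt0.
  exact: certificate.
apply/funext => a; case: (boolP (a \in B)) => aB; last first.
  by case: pi_simplex => _ -> //; case: pi0_simplex => _ -> //.
have := divr1_eq (ratio_eq1 a aB).
rewrite /Defs.mix => /addIr /mulfI; apply; rewrite subr_eq0 gt_eqF //.
Qed.

End Optimality.

Section WaterFilling.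
Variables (R : realType) (d : nat) (B : {set 'I_d}) (poff : 'I_d -> R).
Variables (alpha : R) (i : nat).
Hypotheses (poff_ge0 : forall a, 0 <= poff a) (alpha_ge0 : 0 <= alpha)
  (alpha_lt1 : alpha < 1) (i_lt_r : (i < rnum B poff)%N)
  (beta_le_alpha : beta B poff i.+1 <= alpha)
  (alpha_lt_beta : alpha < beta B poff i).

Local Notation S := (Sset B poff i).
Local Notation piv := (piv B poff).
Local Notation mix := (mix alpha poff).

Definition water_level : R :=
  (1 - alpha + alpha * \sum_(b in S) poff b) / #|S|%:R.

Definition water_fill (a : 'I_d) : R :=
  if a \in S then (water_level - alpha * poff a) / (1 - alpha) else 0.

Local Notation c := water_level.

Let card_S_gt0 : (0 : R) < #|S|%:R.
Proof. by rewrite ltr0n card_Sset_gt0. Qed.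

Let sum_poff_S_ge0 : 0 <= \sum_(b in S) poff b.
Proof. exact: sumr_ge0. Qed.

Lemma water_level_gt0 : 0 < c.
Proof. by rewrite divr_gt0 // ltr_pwDl ?mulr_ge0 // subr_gt0. Qed.

Lemma lt_water_level a : a \in S -> alpha * poff a < c.
Proof.
rewrite inE => /andP[_ poff_a_le].
have i_near_i : (i <= i <= i.+1)%N by rewrite leqnn leqnSn.
have gap_ge0 := Sset_gap_ge0 i_lt_r i_near_i.
move: alpha_lt_beta; rewrite (beta_Sset i_lt_r i_near_i).
rewrite -div1r ltr_pdivlMr ?ltr_wpDr // => alpha_lt.
have : alpha * poff a <= alpha * piv i by rewrite ler_wpM2l.
move=> /(ler_wpM2r (ltW card_S_gt0)) le_poff; rewrite /water_level ltr_pdivlMr //; lra.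
Qed.

Lemma water_level_le a : a \in B -> a \notin S -> c <= alpha * poff a.
Proof.
move=> aB; rewrite inE aB /= -ltNge => piv_lt.
have [k k_lt_r poff_a] := piv_index poff aB.
have i_lt_k : (i < k)%N by rewrite ltnNge -(ler_piv k_lt_r i_lt_r) -poff_a -ltNge.
have i1_lt_r : (i.+1 < rnum B poff)%N := leq_ltn_trans i_lt_k k_lt_r.
have i1_near_i : (i <= i.+1 <= i.+1)%N by rewrite leqnSn leqnn.
have gap_ge0 := Sset_gap_ge0 i1_lt_r i1_near_i.
move: beta_le_alpha; rewrite (beta_Sset i1_lt_r i1_near_i).
rewrite -div1r ler_pdivrMr ?ltr_wpDr // => alpha_ge.
have : alpha * piv i.+1 <= alpha * poff a by rewrite ler_wpM2l // poff_a ler_piv.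
move=> /(ler_wpM2r (ltW card_S_gt0)) le_poff; rewrite /water_level ler_pdivrMr //; lra.
Qed.

Lemma water_fill_simplex : inSimplex B water_fill.
Proof.
split=> [a|a aB|]; rewrite /water_fill.
- by case: ifP => // /lt_water_level ?; rewrite divr_ge0 // subr_ge0 ltW.
- by rewrite inE (negPf aB).
rewrite (bigID (mem S)) /= [X in _ + X]big1 => [|a /negPf -> //].
rewrite addr0 (eq_bigr (fun a => (c - alpha * poff a) / (1 - alpha))) => [|a ->//].
rewrite -mulr_suml sumrB sumr_const -mulr_sumr -mulr_natr /water_level divfK ?gt_eqF //.
by rewrite addrK divff // subr_eq0 gt_eqF.
Qed.

Lemma mix_water_fill_in a : a \in S -> mix water_fill a = c.
Proof. by move=> aS; rewrite /Defs.mix /water_fill aS; field; rewrite subr_eq0 gt_eqF. Qed.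

Lemma mix_water_fill_out a : a \notin S -> mix water_fill a = alpha * poff a.
Proof. by move=> /negPf aS; rewrite /Defs.mix /water_fill aS mulr0 add0r. Qed.

Lemma water_level_le_mix a : a \in B -> c <= mix water_fill a.
Proof.
move=> aB; have [aS|aS] := boolP (a \in S).
  by rewrite mix_water_fill_in.
by rewrite mix_water_fill_out // water_level_le.
Qed.

Lemma mix_water_fill_gt0 a : a \in B -> 0 < mix water_fill a.
Proof. by move=> /water_level_le_mix; apply: lt_le_trans water_level_gt0. Qed.

Lemma water_fill_certificate pi : inSimplex B pi ->
  \sum_(a in B) (mix pi a / mix water_fill a - 1) <= 0.
Proof.
move=> pi_simplex; have pi_ge0 : forall a, 0 <= pi a by case: pi_simplex.
apply: (le_trans (y := \sum_(a in B) (1 - alpha) / c * (pi a - water_fill a))); last first.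
  by rewrite -mulr_sumr sumrB (sum_simplex pi_simplex) (sum_simplex water_fill_simplex) subrr mulr0.
apply: ler_sum => a aB.
have -> : mix pi a / mix water_fill a - 1 =
    (1 - alpha) * (pi a - water_fill a) / mix water_fill a.
  by rewrite /Defs.mix; field; rewrite -/(mix _ a) gt_eqF ?mix_water_fill_gt0.
have [aS|aS] := boolP (a \in S); first by rewrite mix_water_fill_in // mulrAC.
rewrite {1 3}/water_fill (negPf aS) subr0 mulrAC ler_wpM2r // ler_wpM2l ?subr_ge0 ?(ltW alpha_lt1) //.
by rewrite lef_pV2 ?posrE ?mix_water_fill_gt0 ?water_level_gt0 ?water_level_le_mix.
Qed.

Lemma gB_water_fill :
  gB B (mix water_fill) =
  #|S|%:R / (alpha * \sum_(b in S) poff b + 1 - alpha).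
Proof.
rewrite gB_diag => [|a /mix_water_fill_gt0]; last exact: lt0r_neq0.
have [a aS] : exists a, a \in S by apply/card_gt0P; rewrite card_Sset_gt0.
have aB : a \in B by move: aS; rewrite inE => /andP[].
transitivity c^-1; last by rewrite /water_level invf_div; congr (_ / _); ring.
apply/le_anti/andP; split.
  apply: (big_ind (fun y => y <= c^-1)) => [|y z y_le z_le|j _].
  - by rewrite invr_ge0 ltW ?water_level_gt0.
  - by rewrite ge_max y_le z_le.
  by rewrite lef_pV2 ?posrE ?mix_water_fill_gt0 ?water_level_gt0 ?water_level_le_mix ?enum_valP.
rewrite (bigD1 (enum_rank_in aB a)) //= enum_rankK_in //.
by rewrite mix_water_fill_in // le_max lexx.
Qed.

Lemma support_water_fill : [set a | water_fill a != 0] = S.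
Proof.
apply/setP => a; rewrite inE /water_fill; case: ifP => aS; last by rewrite eqxx.
by rewrite gt_eqF // divr_gt0 ?subr_gt0 ?lt_water_level.
Qed.

Lemma water_fill_in a : a \in S ->
  water_fill a = #|S|%:R^-1 +
    alpha / (1 - alpha) * ((\sum_(b in S) poff b) / #|S|%:R - poff a).
Proof.
move=> aS; rewrite /water_fill aS /water_level.
by field; rewrite lt0r_neq0 // subr_eq0 gt_eqF.
Qed.

End WaterFilling.

Unset Implicit Arguments.

Theorem proposition4p7 (R : realType) (d : nat) (poff : 'I_d -> R)
  (Al : {set 'I_d}) (alpha : R) :
  inSimplex [set: 'I_d]%SET poff ->
  (0 < #|Al|)%N ->
  (forall a, a \in Al -> 0 < poff a) ->
  0 <= alpha -> alpha < 1 ->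
  (exists i : nat, (i < rnum Al poff)%N /\
     beta Al poff i.+1 <= alpha < beta Al poff i) /\
  (forall i : nat, (i < rnum Al poff)%N ->
     beta Al poff i.+1 <= alpha < beta Al poff i ->
     forall pistar : 'I_d -> R, is_argmax_logdet Al alpha poff pistar ->
       [/\ gB Al (mix alpha poff pistar) =
             (\sum_(j < i.+1) (mult Al poff j)%:R) /
             (alpha * (\sum_(j < i.+1) (mult Al poff j)%:R * piv Al poff j)
                + 1 - alpha),
           [set a | pistar a != 0] = Sset Al poff i &
           forall a, a \in Sset Al poff i ->
             pistar a = #|Sset Al poff i|%:R^-1 +
               alpha / (1 - alpha) *
                 ((\sum_(b in Sset Al poff i) poff b) / #|Sset Al poff i|%:R
                  - poff a)]).
Proof.
(* Nonnegativity of [poff] suffices: the water level is positive since [alpha < 1]. *)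
move=> [poff_ge0 _ _] Al_gt0 _ alpha_ge0 alpha_lt1.
split; first exact: exists_beta_bracket.
move=> i i_lt_r /andP[beta_le alpha_lt] pistar pistar_max.
have -> : pistar = water_fill Al poff alpha i.
  apply: argmax_logdet_unique pistar_max => //.
  - exact: water_fill_simplex.
  - exact: mix_water_fill_gt0.
  - exact: water_fill_certificate.
rewrite gB_water_fill // -(card_Sset i_lt_r) -(sum_poff_Sset i_lt_r).
split => //; [exact: support_water_fill | exact: water_fill_in].
Qed.
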